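(* Let $R$ be a regular expression with no concatenation under star. Let $R'$ be obtained from $R$ by deleting all Kleene stars that are nested inside another Kleene star and deleting every occurrence of $\varepsilon$ that appears inside a Kleene star. Then $Gl(R)=Gl(R')$.
   Context: Regular expressions over $\Sigma$: $R::=\varepsilon\mid a\mid R^*\mid R\cdot R\mid R+R$ ($a\in\Sigma$). $R$ has no concatenation under star if no concatenation operator occurs in any subexpression nested under a Kleene star. A linearisation of $R$ replaces each atom occurrence by a distinct fresh symbol (position) from an alphabet $\Gamma$ (the same positions serving for $R$ and $R'$, which have the same atom occurrences), $\overline\alpha$ denoting the original letter. The Glushkov automaton $Gl(R)$ is the trim part of $(\Sigma,\{i\}\uplus\Gamma,\Delta,\{i\},F)$ with $\Delta=\{(\alpha,\overline\beta,\beta):\exists u,v\in\Gamma^*,\ u\alpha\beta v\in L(R_{\mathrm{lin}})\}\cup\{(i,\overline\alpha,\alpha):\exists u,\ \alpha u\in L(R_{\mathrm{lin}})\}$ and $F=\{\alpha:\exists u,\ u\alpha\in L(R_{\mathrm{lin}})\}\cup(\{i\}$ if $\varepsilon\in L(R_{\mathrm{lin}}))$, where $R_{\mathrm{lin}}$ is the linearisation. *)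

From Stdlib Require Import List.
Import ListNotations.

Set Implicit Arguments.

Inductive regex (A : Type) : Type :=
| Eps : regex A
| Atom : A -> regex A
| Star : regex A -> regex A
| Cat : regex A -> regex A -> regex A
| Plus : regex A -> regex A -> regex A.
Arguments Eps {A}.

Inductive lang {A : Type} : regex A -> list A -> Prop :=
| lang_eps : lang Eps []
| lang_atom a : lang (Atom a) [a]
| lang_star_nil r : lang (Star r) []
| lang_star_app r u v : lang r u -> lang (Star r) v -> lang (Star r) (u ++ v)
| lang_cat r1 r2 u v : lang r1 u -> lang r2 v -> lang (Cat r1 r2) (u ++ v)
| lang_plus_l r1 r2 u : lang r1 u -> lang (Plus r1 r2) u
| lang_plus_r r1 r2 u : lang r2 u -> lang (Plus r1 r2) u.

Fixpoint no_cat {A : Type} (r : regex A) : Prop :=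
  match r with
  | Eps | Atom _ => True
  | Star r1 => no_cat r1
  | Cat _ _ => False
  | Plus r1 r2 => no_cat r1 /\ no_cat r2
  end.

Fixpoint no_cat_under_star {A : Type} (r : regex A) : Prop :=
  match r with
  | Eps | Atom _ => True
  | Star r1 => no_cat r1
  | Cat r1 r2 | Plus r1 r2 => no_cat_under_star r1 /\ no_cat_under_star r2
  end.

(* Combine two optional subexpressions under a binary operator, where
   [None] means "everything was deleted". *)
Definition opt_bin {A : Type} (op : regex A -> regex A -> regex A)
  (o1 o2 : option (regex A)) : option (regex A) :=
  match o1, o2 with
  | Some r1, Some r2 => Some (op r1 r2)
  | Some r1, None => Some r1
  | None, Some r2 => Some r2
  | None, None => None
  end.

Fixpoint strip_inner {A : Type} (r : regex A) : option (regex A) :=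
  match r with
  | Eps => None
  | Atom a => Some (Atom a)
  | Star r1 => strip_inner r1
  | Cat r1 r2 => opt_bin (@Cat A) (strip_inner r1) (strip_inner r2)
  | Plus r1 r2 => opt_bin (@Plus A) (strip_inner r1) (strip_inner r2)
  end.

(* If the body becomes empty (it consisted of
   eps only), the star of the empty expression is the expression eps. *)
Fixpoint strip {A : Type} (r : regex A) : regex A :=
  match r with
  | Eps => Eps
  | Atom a => Atom a
  | Star r1 => match strip_inner r1 with
               | Some r1' => Star r1'
               | None => Eps
               end
  | Cat r1 r2 => Cat (strip r1) (strip r2)
  | Plus r1 r2 => Plus (strip r1) (strip r2)
  end.

(* Linearisation: atom occurrences are numbered left to right; a position
   is a pair (index, original letter), so that the original letter of a
   position alpha is [snd alpha]. *)
Fixpoint lin_aux {A : Type} (r : regex A) (n : nat) : regex (nat * A) * nat :=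
  match r with
  | Eps => (Eps, n)
  | Atom a => (Atom (n, a), S n)
  | Star r1 => let (l1, n1) := lin_aux r1 n in (Star l1, n1)
  | Cat r1 r2 => let (l1, n1) := lin_aux r1 n in
                 let (l2, n2) := lin_aux r2 n1 in (Cat l1 l2, n2)
  | Plus r1 r2 => let (l1, n1) := lin_aux r1 n in
                  let (l2, n2) := lin_aux r2 n1 in (Plus l1 l2, n2)
  end.

Definition linearize {A : Type} (r : regex A) : regex (nat * A) := fst (lin_aux r 0).

Record automaton (Sigma Q : Type) := mkAut {
  a_states : Q -> Prop;
  a_init : Q -> Prop;
  a_delta : Q -> Sigma -> Q -> Prop;
  a_final : Q -> Prop }.

Definition aut_eq {Sigma Q : Type} (M N : automaton Sigma Q) : Prop :=
  (forall q, a_states M q <-> a_states N q) /\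
  (forall q, a_init M q <-> a_init N q) /\
  (forall q a q', a_delta M q a q' <-> a_delta N q a q') /\
  (forall q, a_final M q <-> a_final N q).

Section Glushkov.
Variable Sigma : Type.
Local Notation Pos := (nat * Sigma)%type.
(* states: None is the initial state i, Some alpha is position alpha *)
Local Notation St := (option Pos).

Definition gl_delta (L : regex Pos) (q : St) (a : Sigma) (q' : St) : Prop :=
  match q, q' with
  | Some al, Some be => a = snd be /\ exists u v, lang L (u ++ al :: be :: v)
  | None, Some al => a = snd al /\ exists u, lang L (al :: u)
  | _, None => False
  end.

Definition gl_final (L : regex Pos) (q : St) : Prop :=
  match q with
  | Some al => exists u, lang L (u ++ [al])
  | None => lang L []
  end.

Inductive reach (L : regex Pos) : St -> St -> Prop :=
| reach_refl q : reach L q q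
| reach_step q a q' q'' : gl_delta L q a q' -> reach L q' q'' -> reach L q q''.

Definition gl_trim_state (L : regex Pos) (q : St) : Prop :=
  reach L None q /\ exists f, reach L q f /\ gl_final L f.

(* Glushkov automaton of a linearised expression: trim part of
   (Sigma, {i} + Gamma, Delta, {i}, F). *)
Definition GlLin (L : regex Pos) : automaton Sigma St :=
  {| a_states := gl_trim_state L;
     a_init := fun q => q = None /\ gl_trim_state L q;
     a_delta := fun q a q' => gl_trim_state L q /\ gl_trim_state L q' /\ gl_delta L q a q';
     a_final := fun q => gl_trim_state L q /\ gl_final L q |}.

Definition Gl (R : regex Sigma) : automaton Sigma St := GlLin (linearize R).
End Glushkov.

(* Under a star whose body [r] has no concatenation, every atom of [r] is on
   its own a word of [r], and every word of [r] is made of atoms of [r]; so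
   [Star r] denotes exactly the words over the atoms of [r].  Deleting nested
   stars and occurrences of eps keeps the list of atoms (in order), hence R and
   R' denote the same language.  Because the atom order is kept, linearisation
   commutes with the deletion, so the linearised expressions of R and R' also
   have the same language, and the Glushkov automaton depends only on that
   language. *)

From Stdlib Require Import List Lia.
Import ListNotations.

Set Implicit Arguments.

Section Languages.
Variable A : Type.
Implicit Types (r s : regex A) (w : list A).

Fixpoint atoms r : list A :=
  match r with
  | Eps => []
  | Atom a => [a]
  | Star r1 => atoms r1
  | Cat r1 r2 | Plus r1 r2 => atoms r1 ++ atoms r2
  end.

Lemma lang_eps_iff w : lang Eps w <-> w = [].
Proof. split; [intros H; inversion H; auto | intros ->; constructor]. Qed.

Lemma lang_cat_iff r1 r2 w :
  lang (Cat r1 r2) w <-> exists u v, w = u ++ v /\ lang r1 u /\ lang r2 v.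
Proof.
  split.
  - intros H; inversion H; subst; eauto.
  - intros (u & v & -> & H1 & H2); constructor; auto.
Qed.

Lemma lang_plus_iff r1 r2 w : lang (Plus r1 r2) w <-> lang r1 w \/ lang r2 w.
Proof.
  split.
  - intros H; inversion H; subst; auto.
  - intros [H | H]; [apply lang_plus_l | apply lang_plus_r]; auto.
Qed.

Lemma lang_incl_atoms r w : lang r w -> incl w (atoms r).
Proof.
  induction 1; simpl; try apply incl_nil_l.
  - apply incl_refl.
  - apply incl_app; assumption.
  - apply incl_app; [apply incl_appl | apply incl_appr]; assumption.
  - apply incl_appl; assumption.
  - apply incl_appr; assumption.
Qed.

Lemma lang_atom_no_cat r x : no_cat r -> In x (atoms r) -> lang r [x].
Proof.
  induction r as [| a | r1 IH1 | r1 IH1 r2 IH2 | r1 IH1 r2 IH2];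
    simpl; intros Hr Hx; try tauto.
  - destruct Hx as [<- | []]; constructor.
  - rewrite <- (app_nil_r [x]); repeat constructor; auto.
  - destruct Hr as [Hr1 Hr2]; apply lang_plus_iff.
    apply in_app_or in Hx as [Hx | Hx]; auto.
Qed.

Lemma lang_star_no_cat r w : no_cat r -> lang (Star r) w <-> incl w (atoms r).
Proof.
  intros Hr; split; [intros Hw; exact (lang_incl_atoms Hw) |].
  induction w as [| x w IH]; intros Hw; [constructor |].
  apply incl_cons_inv in Hw as [Hx Hw].
  change (x :: w) with ([x] ++ w); constructor; auto using lang_atom_no_cat.
Qed.

Lemma atoms_strip_inner r :
  match strip_inner r with Some s => atoms s | None => [] end = atoms r.
Proof.
  induction r as [| a | r1 IH1 | r1 IH1 r2 IH2 | r1 IH1 r2 IH2]; simpl; auto;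
    destruct (strip_inner r1), (strip_inner r2); simpl;
    rewrite <- IH1, <- IH2; auto using app_nil_r.
Qed.

Lemma atoms_strip r : atoms (strip r) = atoms r.
Proof.
  induction r as [| a | r1 _ | r1 IH1 r2 IH2 | r1 IH1 r2 IH2]; simpl;
    try congruence.
  rewrite <- (atoms_strip_inner r1); destruct (strip_inner r1); reflexivity.
Qed.

Lemma no_cat_strip_inner r s : no_cat r -> strip_inner r = Some s -> no_cat s.
Proof.
  revert s.
  induction r as [| a | r1 IH1 | r1 IH1 r2 IH2 | r1 IH1 r2 IH2]; simpl;
    intros s Hr Hs; try discriminate; try tauto.
  - injection Hs as <-; exact I.
  - eauto.
  - destruct Hr as [Hr1 Hr2].
    destruct (strip_inner r1), (strip_inner r2); simpl in Hs;
      try discriminate; injection Hs as <-; simpl; eauto.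
Qed.

Lemma lang_strip r w : no_cat_under_star r -> lang (strip r) w <-> lang r w.
Proof.
  revert w.
  induction r as [| a | r1 _ | r1 IH1 r2 IH2 | r1 IH1 r2 IH2]; simpl;
    intros w Hr; try tauto.
  - rewrite (lang_star_no_cat r1 w Hr), <- atoms_strip_inner.
    destruct (strip_inner r1) as [s |] eqn:Hs.
    + apply lang_star_no_cat, (no_cat_strip_inner r1 Hr Hs).
    + rewrite lang_eps_iff; split; [intros ->; apply incl_nil_l | apply incl_l_nil].
  - destruct Hr as [Hr1 Hr2]; rewrite !lang_cat_iff.
    split; intros (u & v & -> & Hu & Hv); exists u, v;
      rewrite ?IH1, ?IH2 in *; auto.
  - destruct Hr as [Hr1 Hr2]; rewrite !lang_plus_iff, IH1, IH2; tauto.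
Qed.

End Languages.

Section Linearisation.
Variable A : Type.
Implicit Types (r s : regex A).

Definition lin_at r n : regex (nat * A) := fst (lin_aux r n).

Lemma lin_aux_counter r n : snd (lin_aux r n) = n + length (atoms r).
Proof.
  revert n.
  induction r as [| a | r1 IH1 | r1 IH1 r2 IH2 | r1 IH1 r2 IH2]; intros n;
    simpl; try lia;
    specialize (IH1 n); destruct (lin_aux r1 n) as [l1 n1]; simpl in *; auto;
    specialize (IH2 n1); destruct (lin_aux r2 n1) as [l2 n2]; simpl in *;
    rewrite length_app; lia.
Qed.

Lemma lin_aux_spec r n : lin_aux r n = (lin_at r n, n + length (atoms r)).
Proof. rewrite <- lin_aux_counter; apply surjective_pairing. Qed.

Lemma lin_at_star r n : lin_at (Star r) n = Star (lin_at r n).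
Proof. unfold lin_at at 1; simpl; rewrite lin_aux_spec; reflexivity. Qed.

Lemma lin_at_cat r1 r2 n :
  lin_at (Cat r1 r2) n = Cat (lin_at r1 n) (lin_at r2 (n + length (atoms r1))).
Proof. unfold lin_at at 1; simpl; rewrite !lin_aux_spec; reflexivity. Qed.

Lemma lin_at_plus r1 r2 n :
  lin_at (Plus r1 r2) n = Plus (lin_at r1 n) (lin_at r2 (n + length (atoms r1))).
Proof. unfold lin_at at 1; simpl; rewrite !lin_aux_spec; reflexivity. Qed.

Lemma no_cat_lin_at r n : no_cat r -> no_cat (lin_at r n).
Proof.
  revert n.
  induction r as [| a | r1 IH1 | r1 IH1 r2 IH2 | r1 IH1 r2 IH2]; intros n Hr;
    rewrite ?lin_at_star, ?lin_at_cat, ?lin_at_plus; simpl in *;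
    try destruct Hr; auto.
Qed.

Lemma no_cat_under_star_lin_at r n :
  no_cat_under_star r -> no_cat_under_star (lin_at r n).
Proof.
  revert n.
  induction r as [| a | r1 _ | r1 IH1 r2 IH2 | r1 IH1 r2 IH2]; intros n Hr;
    rewrite ?lin_at_star, ?lin_at_cat, ?lin_at_plus; simpl in *;
    auto using no_cat_lin_at; destruct Hr; auto.
Qed.

Lemma strip_inner_lin_at r n :
  strip_inner (lin_at r n) = option_map (fun s => lin_at s n) (strip_inner r).
Proof.
  revert n.
  induction r as [| a | r1 IH1 | r1 IH1 r2 IH2 | r1 IH1 r2 IH2]; intros n;
    rewrite ?lin_at_star, ?lin_at_cat, ?lin_at_plus; simpl; auto;
    rewrite IH1, IH2; pose proof (atoms_strip_inner r1) as Hatoms;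
    destruct (strip_inner r1), (strip_inner r2); simpl in *;
    rewrite ?lin_at_cat, ?lin_at_plus, ?Hatoms, <- ?Hatoms; simpl;
    rewrite <- ?plus_n_O; reflexivity.
Qed.

Lemma lin_at_strip r n : lin_at (strip r) n = strip (lin_at r n).
Proof.
  revert n.
  induction r as [| a | r1 _ | r1 IH1 r2 IH2 | r1 IH1 r2 IH2]; intros n;
    rewrite ?lin_at_star, ?lin_at_cat, ?lin_at_plus; simpl; auto.
  - rewrite strip_inner_lin_at; destruct (strip_inner r1); simpl;
      rewrite ?lin_at_star; reflexivity.
  - rewrite lin_at_cat, atoms_strip, IH1, IH2; reflexivity.
  - rewrite lin_at_plus, atoms_strip, IH1, IH2; reflexivity.
Qed.

End Linearisation.

Section GlushkovLanguage.
Variable Sigma : Type.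
Variables L L' : regex (nat * Sigma).
Hypothesis same_lang : forall w, lang L w <-> lang L' w.

Lemma gl_delta_iff q a q' : gl_delta L q a q' <-> gl_delta L' q a q'.
Proof.
  destruct q, q'; simpl; try tauto.
  - split; intros [Ha (u & v & H)]; split; auto; exists u, v; apply same_lang; auto.
  - split; intros [Ha (u & H)]; split; auto; exists u; apply same_lang; auto.
Qed.

Lemma gl_final_iff q : gl_final L q <-> gl_final L' q.
Proof.
  destruct q; simpl; [| apply same_lang].
  split; intros [u H]; exists u; apply same_lang; auto.
Qed.

Lemma reach_iff q q' : reach L q q' <-> reach L' q q'.
Proof.
  split; induction 1; econstructor; eauto; apply gl_delta_iff; eauto.
Qed.

Lemma gl_trim_state_iff q : gl_trim_state L q <-> gl_trim_state L' q.
Proof.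
  unfold gl_trim_state.
  setoid_rewrite reach_iff; setoid_rewrite gl_final_iff; reflexivity.
Qed.

Lemma GlLin_same_lang : aut_eq (GlLin L) (GlLin L').
Proof.
  unfold aut_eq; simpl.
  split; [| split; [| split]]; intros;
    rewrite ?gl_trim_state_iff, ?gl_delta_iff, ?gl_final_iff; reflexivity.
Qed.

End GlushkovLanguage.

Theorem lemmaD50 (Sigma : Type) (R : regex Sigma) :
  no_cat_under_star R -> aut_eq (Gl R) (Gl (strip R)).
Proof.
  intros HR.
  change (aut_eq (GlLin (lin_at R 0)) (GlLin (lin_at (strip R) 0))).
  rewrite lin_at_strip.
  apply GlLin_same_lang; intros w.
  symmetry; apply lang_strip, no_cat_under_star_lin_at, HR.
Qed.
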